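(* There is a unique family $\{\Lambda_M\}_{M\in\mathcal{M}}$ of bijections $\Lambda_M:\mathcal{B}(M)\to\mathcal{S}_{\mathsf{lex}}(M)$ such that for every $M\in\mathcal{M}$ with nonempty ground set, with $m=m(M)$ the largest element of its ground set, and every $B\in\mathcal{B}(M)$: \begin{align*} \Lambda_M(B)&\subseteq B,\\ \Lambda_M(B)&=\Lambda_{M\backslash m}(B) &&\text{if } m\notin B,\\ \Lambda_M(B)\setminus\{m\}&=\Lambda_{M/m}(B\setminus\{m\}) &&\text{if } m\in B. \end{align*}
   Context: $\mathcal{M}$ is the collection of all matroids whose ground set is a finite subset of $\mathbb{N}$; $\mathcal{B}(M)$ is the set of bases of $M$. For $M$ on ground set $E$, $V_M=\{\mathbf{e}_B : B\in\mathcal{B}(M)\}\subseteq\{0,1\}^E$ ($\mathbf{e}_B$ the characteristic vector), $I(V_M)\subseteq\mathbb{R}[x_e:e\in E]$ its vanishing ideal, and with respect to the lexicographic term order with $x_e\succ x_f$ for $e<f$, the lexicographic standard complex is $\mathcal{S}_{\mathsf{lex}}(M)=\{\tau\subseteq E:\prod_{i\in\tau}x_i\notin \mathrm{in}(I(V_M))\}$. If $E=\emptyset$ then $\mathcal{B}(M)=\mathcal{S}_{\mathsf{lex}}(M)=\{\emptyset\}$. $M\backslash m$, $M/m$ denote deletion and contraction. *)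

From HB Require Import structures.
From mathcomp Require Import all_boot all_order all_algebra.
From mathcomp Require Import finmap.
From mathcomp Require Import mpoly.
From mathcomp Require Import Rstruct.
From Stdlib Require Rdefinitions.
Notation Real := Rdefinitions.R.

Set Implicit Arguments.
Unset Strict Implicit.
Unset Printing Implicit Defensive.

Import GRing.Theory.
Local Open Scope fset_scope.

Definition is_matroid (E : {fset nat}) (Bs : {fset {fset nat}}) : Prop :=
  [/\ Bs != fset0,
      (forall B, B \in Bs -> B `<=` E) &
      (forall B1 B2 x, B1 \in Bs -> B2 \in Bs -> x \in B1 `\` B2 ->
         exists2 y, y \in B2 `\` B1 & (B1 `\ x) `|` [fset y] \in Bs)].

(* Deletion M \ m (standard: if m is a coloop, the bases are B \ {m};
   otherwise the bases of M avoiding m). *)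
Definition del_bases (Bs : {fset {fset nat}}) (m : nat) : {fset {fset nat}} :=
  if [forall B : Bs, m \in val B] then [fset B `\ m | B in Bs]
  else [fset B in Bs | m \notin B].

(* Contraction M / m (standard: if m is a loop, the bases are those of M;
   otherwise the sets B \ {m} for bases B containing m). *)
Definition con_bases (Bs : {fset {fset nat}}) (m : nat) : {fset {fset nat}} :=
  if [forall B : Bs, m \notin val B] then Bs
  else [fset B `\ m | B in [fset B in Bs | m \in B]].

(* The variables x_e, e in E, are indexed by 'I_#|E| via the increasing    *)
(* enumeration of E: index i <-> the i-th smallest element of E.           *)

Definition gsz (E : {fset nat}) : nat := #|` E|.
Definition gel (E : {fset nat}) (i : nat) : nat := nth 0%N (sort leq E) i.

Notation Rpoly E := {mpoly Real[gsz E]}.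

Definition charvec (E : {fset nat}) (B : {fset nat}) : 'I_(gsz E) -> Real :=
  fun i => (((gel E i \in B) : nat)%:R)%R.

Definition vanishing (E : {fset nat}) (Bs : {fset {fset nat}}) (f : Rpoly E) : Prop :=
  forall B, B \in Bs -> meval (@charvec E B) f = 0%R.

(* Lexicographic order with x_e > x_f for e < f, i.e. variable index 0 is
   the largest: m1 <lex m2 iff at the first index where they differ,
   m1 has the smaller exponent. *)
Definition lexlt n (m1 m2 : 'X_{1..n}) : bool :=
  [exists i : 'I_n, [forall j : 'I_n, (j < i)%N ==> (m1 j == m2 j)] && (m1 i < m2 i)%N].

Definition is_lead_mono n (f : {mpoly Real[n]}) (m : 'X_{1..n}) : Prop :=
  m \in msupp f /\ forall m', m' \in msupp f -> m' != m -> lexlt m' m.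

Definition in_initial (E : {fset nat}) (Bs : {fset {fset nat}}) (p : Rpoly E) : Prop :=
  exists l : seq (Rpoly E * Rpoly E * 'X_{1..gsz E}),
    (forall t, t \in l -> vanishing Bs t.1.2 /\ is_lead_mono t.1.2 t.2) /\
    p = (\sum_(t <- l) t.1.1 * 'X_[t.2])%R.

Definition sqfree_mono (E : {fset nat}) (tau : {fset nat}) : 'X_{1..gsz E} :=
  [multinom ((gel E i \in tau) : nat) | i < gsz E].

Definition in_Slex (E : {fset nat}) (Bs : {fset {fset nat}}) (tau : {fset nat}) : Prop :=
  tau `<=` E /\ ~ in_initial Bs ('X_[@sqfree_mono E tau] : Rpoly E).

Definition lam_family := {fset nat} -> {fset {fset nat}} -> {fset nat} -> {fset nat}.

Definition is_bij_to_Slex (E : {fset nat}) (Bs : {fset {fset nat}})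
    (L : {fset nat} -> {fset nat}) : Prop :=
  [/\ (forall B, B \in Bs -> in_Slex E Bs (L B)),
      (forall B1 B2, B1 \in Bs -> B2 \in Bs -> L B1 = L B2 -> B1 = B2) &
      (forall tau, in_Slex E Bs tau -> exists2 B, B \in Bs & L B = tau)].

Definition good_family (Lam : lam_family) : Prop :=
  forall E Bs, is_matroid E Bs ->
    is_bij_to_Slex E Bs (Lam E Bs) /\
    forall m, m \in E -> (forall x, x \in E -> (x <= m)%N) ->
    forall B, B \in Bs ->
      [/\ Lam E Bs B `<=` B,
          m \notin B -> Lam E Bs B = Lam (E `\ m) (del_bases Bs m) B &
          m \in B -> Lam E Bs B `\ m = Lam (E `\ m) (con_bases Bs m) (B `\ m)].

(* Order the variables by the ground set, so that the largest element m of E carries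
   the lex-smallest variable x_m.  V_M splits along x_m into the fibre V_0 of the bases
   avoiding m and the fibre V_1 = {B \ m : m in B}.  Specialising x_m to 0 and 1, and
   conversely lifting pairs of polynomials to g_0 + g_1 x_m, shows that for m not in tau
   the monomial x^tau lies in in(I(V_M)) iff it lies in both in(I(V_0)) and in(I(V_1)),
   whereas x^tau x_m does iff x^tau lies in one of them.  Each fibre is empty or the set
   of bases of M\m, resp. M/m, so the bijections for the two minors glue to one for M:
   Lambda_M(B) = Lambda_{M\m}(B) if m is not in B, and otherwise Lambda_M(B) is
   tau + m or tau, where tau = Lambda_{M/m}(B \ m), according as tau + m is or is not in
   S_lex(M).  Conversely, injectivity forces every family with the stated properties to
   obey this rule, which gives uniqueness. *)

From mathcomp Require Import all_boot all_order all_algebra.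
From mathcomp Require Import finmap mpoly Rstruct.
From Stdlib Require Import Classical ClassicalEpsilon FunctionalExtensionality.

Set Implicit Arguments.
Unset Strict Implicit.
Unset Printing Implicit Defensive.
Import GRing.Theory Num.Theory.

Local Open Scope ring_scope.

Section LeadingMonomials.
Variable n : nat.
Implicit Types (m a c : 'X_{1..n}) (f : {mpoly Real[n]}).

Lemma lexlt_irr m : ~~ lexlt m m.
Proof. by apply/existsP=> -[i /andP[_]]; rewrite ltnn. Qed.

Lemma lexlt_addl c m1 m2 : lexlt m1 m2 -> lexlt (c + m1)%MM (c + m2)%MM.
Proof.
case/existsP=> i /andP[/forallP eq_before lt_i]; apply/existsP; exists i.
rewrite !mnmDE ltn_add2l lt_i andbT; apply/forallP=> j; apply/implyP=> ji.
by rewrite !mnmDE (eqP (implyP (eq_before j) ji)).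
Qed.

Lemma is_lead_monoE f a :
  is_lead_mono f a <-> f@_a != 0 /\ forall m, f@_m != 0 -> m != a -> lexlt m a.
Proof.
rewrite /is_lead_mono mcoeff_msupp; split=> -[fa lead]; split=> // m.
  by rewrite -mcoeff_msupp; apply: lead.
by rewrite mcoeff_msupp; apply: lead.
Qed.

Lemma mcoeffMX_cond f c k :
  (f * 'X_[c])@_k = if (c <= k)%MM then f@_(k - c)%MM else 0.
Proof.
case: ifP=> ck; first by rewrite -{1}(submK ck) addmC mcoeffMX.
rewrite {1}(mpolyE f) mulr_suml raddf_sum /= big1_seq // => m _.
rewrite -scalerAl -mpolyXD mcoeffZ mcoeffX.
by case: eqP=> [km|]; [move: ck; rewrite -km lem_addl | rewrite mulr0].
Qed.

Definition init_mono (P : ('I_n -> Real) -> Prop) a : Prop :=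
  exists f, (forall v, P v -> meval v f = 0) /\ is_lead_mono f a.

Lemma init_monoD P a c : init_mono P a -> init_mono P (a + c)%MM.
Proof.
case=> f [vanish /is_lead_monoE [fa lead]]; exists (f * 'X_[c]); split.
  by move=> v Pv; rewrite mevalM vanish // mul0r.
apply/is_lead_monoE; rewrite mcoeffMX_cond lem_addl addmK; split=> // m.
rewrite mcoeffMX_cond; case: ifP=> [cm fm ma|_]; last by rewrite eqxx.
have ma' : (m - c)%MM != a by apply: contra ma => /eqP <-; rewrite submK.
by have := lexlt_addl c (lead _ fm ma'); rewrite addmC submK // addmC.
Qed.

Lemma init_mono_pred0 (P : ('I_n -> Real) -> Prop) a :
  (forall v, ~ P v) -> init_mono P a.
Proof.
move=> P0; exists 'X_[a]; split=> [v /P0 //|]; apply/is_lead_monoE.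
rewrite mcoeffX eqxx oner_eq0; split=> // m; rewrite mcoeffX.
by have [->|_] := eqVneq a m; rewrite ?eqxx.
Qed.

Lemma eq_init_mono (P Q : ('I_n -> Real) -> Prop) a :
  (forall v, P v <-> Q v) -> init_mono P a -> init_mono Q a.
Proof. by move=> PQ [f [vanish lead]]; exists f; split=> // v /PQ /vanish. Qed.

End LeadingMonomials.

Lemma init_mono_dim0 (P : ('I_0 -> Real) -> Prop) a v : P v -> ~ init_mono P a.
Proof.
move=> Pv [f [/(_ v Pv) + /is_lead_monoE [fa _]]]; rewrite mevalE.
have mon0 m : m = a by apply/mnmP=> -[].
under eq_bigr => m _ do rewrite big_ord0 mulr1.
rewrite (bigD1_seq a) ?msupp_uniq ?mcoeff_msupp //= big1_seq ?addr0 => [|m].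
  by move/eqP; rewrite (negbTE fa).
by rewrite (mon0 m) eqxx.
Qed.

Section LastVariable.
Variable n : nat.
Implicit Types (b c : 'X_{1..n}) (a m : 'X_{1..n.+1}) (g : {mpoly Real[n]}).
Implicit Types (f : {mpoly Real[n.+1]}) (v : 'I_n -> Real).

Definition mrcons b (j : nat) : 'X_{1..n.+1} :=
  [multinom (if unlift ord_max i is Some k then b k else j) | i < n.+1].
Definition mbelast m : 'X_{1..n} := [multinom m (lift ord_max k) | k < n].
Definition vrcons v (x : Real) : 'I_n.+1 -> Real :=
  fun i => if unlift ord_max i is Some k then v k else x.
Definition vbelast (w : 'I_n.+1 -> Real) : 'I_n -> Real := fun k => w (lift ord_max k).

Lemma mrcons_max b j : mrcons b j ord_max = j.
Proof. by rewrite mnmE unlift_none. Qed.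

Lemma mbelastE m k : mbelast m k = m (lift ord_max k).
Proof. by rewrite mnmE. Qed.

Lemma mrconsK b j : mbelast (mrcons b j) = b.
Proof. by apply/mnmP=> k; rewrite !mnmE liftK. Qed.

Lemma mbelastK m : mrcons (mbelast m) (m ord_max) = m.
Proof. by apply/mnmP=> i; rewrite mnmE; case: unliftP => [k ->|->]; rewrite ?mnmE. Qed.

Lemma eq_mrcons b1 b2 j1 j2 : (mrcons b1 j1 == mrcons b2 j2) = (b1 == b2) && (j1 == j2).
Proof.
apply/eqP/andP=> [e|[/eqP-> /eqP->]] //; split; apply/eqP.
  by rewrite -(mrconsK b1 j1) e mrconsK.
by rewrite -(mrcons_max b1 j1) e mrcons_max.
Qed.

Lemma vbelastK w : vrcons (vbelast w) (w ord_max) = w.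
Proof. by apply: functional_extensionality=> i; rewrite /vrcons; case: unliftP => [k ->|->]. Qed.

Lemma lexlt_rcons m1 m2 : lexlt m1 m2 = lexlt (mbelast m1) (mbelast m2) ||
  (mbelast m1 == mbelast m2) && (m1 ord_max < m2 ord_max)%N.
Proof.
apply/idP/idP.
  case/existsP=> i /andP[/forallP eq_before].
  case: (unliftP ord_max i) eq_before => [k ->|->] eq_before lt_i.
    apply/orP; left; apply/existsP; exists k; rewrite !mbelastE lt_i andbT.
    apply/forallP=> j; apply/implyP=> jk; rewrite !mbelastE.
    by apply: (implyP (eq_before (lift ord_max j))); rewrite !lift_max.
  apply/orP; right; rewrite lt_i andbT; apply/eqP/mnmP=> k; rewrite !mbelastE.
  by apply/eqP; apply: (implyP (eq_before (lift ord_max k))); rewrite lift_max /=.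
case/orP=> [/existsP[k /andP[/forallP eq_before lt_k]]|/andP[/eqP e lt_max]]; apply/existsP.
  exists (lift ord_max k); rewrite -!mbelastE lt_k andbT; apply/forallP=> j.
  apply/implyP; case: (unliftP ord_max j) => [j' ->|->]; rewrite lift_max.
    by rewrite lift_max -!mbelastE => /(implyP (eq_before j')).
  by rewrite /= ltnNge ltnW.
exists ord_max; rewrite lt_max andbT; apply/forallP=> j; apply/implyP.
by case: (unliftP ord_max j) => [j' ->|->]; rewrite ?ltnn // -!mbelastE e.
Qed.

Lemma prod_ord_rcons (F : 'I_n.+1 -> Real) :
  \prod_(i < n.+1) F i = (\prod_(k < n) F (lift ord_max k)) * F ord_max.
Proof.
rewrite big_ord_recr; congr (_ * _); apply: eq_bigr=> k _; congr F.
by apply/val_inj; rewrite /= /bump leqNgt ltn_ord.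
Qed.

Definition mfix_last f (x : Real) : {mpoly Real[n]} :=
  \sum_(m <- msupp f) (f@_m * x ^+ (m ord_max)) *: 'X_[mbelast m].

(* g0 + g1 x_n *)
Definition maff g0 g1 : {mpoly Real[n.+1]} :=
  \sum_(c <- msupp g0) g0@_c *: 'X_[mrcons c 0] +
  \sum_(c <- msupp g1) g1@_c *: 'X_[mrcons c 1].

Lemma meval_fix_last v f x : meval v (mfix_last f x) = meval (vrcons v x) f.
Proof.
rewrite [RHS]mevalE raddf_sum /=; apply: eq_bigr=> m _.
rewrite mevalZ mevalX prod_ord_rcons /vrcons unlift_none -mulrA; congr (_ * _).
by rewrite mulrC; congr (_ * _); apply: eq_bigr=> k _; rewrite liftK mbelastE.
Qed.

Lemma mcoeff_fix_last f x b : (mfix_last f x)@_b =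
  \sum_(m <- msupp f) f@_m * x ^+ (m ord_max) * (mbelast m == b)%:R.
Proof. by rewrite /mfix_last raddf_sum /=; apply: eq_bigr=> m _; rewrite mcoeffZ mcoeffX. Qed.

Lemma meval_maff v x g0 g1 : meval (vrcons v x) (maff g0 g1) = meval v g0 + meval v g1 * x.
Proof.
have meval_rcons g j : meval (vrcons v x) (\sum_(c <- msupp g) g@_c *: 'X_[mrcons c j])
    = meval v g * x ^+ j.
  rewrite (mevalE v) mulr_suml raddf_sum /=; apply: eq_bigr=> c _.
  rewrite mevalZ mevalX prod_ord_rcons /vrcons unlift_none mrcons_max -mulrA.
  by congr (_ * (_ * _)); apply: eq_bigr=> k _; rewrite liftK mnmE liftK.
by rewrite mevalD !meval_rcons expr0 expr1 mulr1.
Qed.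

Lemma mcoeff_maff g0 g1 m : (maff g0 g1)@_m =
  if m ord_max == 0%N then g0@_(mbelast m)
  else if m ord_max == 1%N then g1@_(mbelast m) else 0.
Proof.
have mcoeff_rcons g j : (\sum_(c <- msupp g) g@_c *: 'X_[mrcons c j])@_m =
    if m ord_max == j then g@_(mbelast m) else 0.
  rewrite raddf_sum /=.
  under eq_bigr => c _ do rewrite mcoeffZ mcoeffX -{1}(mbelastK m) eq_mrcons.
  have [_|_] := eqVneq j (m ord_max); last by rewrite big1 // => c _; rewrite andbF mulr0.
  rewrite [in RHS](mpolyE g) raddf_sum /=; apply: eq_bigr=> c _.
  by rewrite andbT mcoeffZ mcoeffX.
by rewrite mcoeffD !mcoeff_rcons; case: (m ord_max) => [|[|k]]; rewrite ?addr0 ?add0r.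
Qed.

Lemma is_lead_fix_last f a x : is_lead_mono f a ->
  (mfix_last f x)@_(mbelast a) != 0 -> is_lead_mono (mfix_last f x) (mbelast a).
Proof.
move=> /is_lead_monoE [fa lead] fxa; apply/is_lead_monoE; split=> // c.
rewrite mcoeff_fix_last => fxc ne.
have [/hasP[m mf /eqP mc]|] := boolP (has (fun m => mbelast m == c) (msupp f)).
  have ma : m != a by apply: contra ne => /eqP <-; rewrite mc.
  move: (lead m); rewrite -mcoeff_msupp => /(_ mf ma).
  by rewrite lexlt_rcons mc (negbTE ne) orbF.
move/hasPn=> nomc; case/eqP: fxc; apply: big1_seq=> m /andP[_ /nomc].
by move/negbTE ->; rewrite mulr0.
Qed.

Lemma mcoeff_fix_last0 f b x : is_lead_mono f (mrcons b 0) ->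
  (mfix_last f x)@_b = f@_(mrcons b 0).
Proof.
move=> /is_lead_monoE [fb lead]; rewrite mcoeff_fix_last.
rewrite (bigD1_seq (mrcons b 0)) ?msupp_uniq //=; last by rewrite mcoeff_msupp.
rewrite mrcons_max mrconsK eqxx expr0 !mulr1 big1_seq ?addr0 // => m /andP[ne _].
case: eqP=> [mb|_]; last by rewrite mulr0.
have [->|fm] := eqVneq (f@_m) 0; first by rewrite !mul0r.
move: (lead m fm ne); rewrite lexlt_rcons mrconsK mb (negbTE (lexlt_irr b)).
by rewrite mrcons_max ltn0 andbF.
Qed.

Lemma mcoeff_fix_last1 f b : is_lead_mono f (mrcons b 1) ->
  (mfix_last f 1)@_b - (mfix_last f 0)@_b = f@_(mrcons b 1).
Proof.
move=> /is_lead_monoE [fb lead]; rewrite !mcoeff_fix_last -sumrB.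
rewrite (bigD1_seq (mrcons b 1)) ?msupp_uniq //=; last by rewrite mcoeff_msupp.
rewrite mrcons_max mrconsK eqxx expr1 expr0n !mulr1 mulr0 subr0.
rewrite big1_seq ?addr0 // => m /andP[ne _].
case: eqP=> [mb|_]; last by rewrite !mulr0 subrr.
have [->|fm] := eqVneq (f@_m) 0; first by rewrite !mul0r subrr.
move: (lead m fm ne); rewrite lexlt_rcons mrconsK mb (negbTE (lexlt_irr b)) eqxx mrcons_max.
by rewrite ltnS leqn0 => /eqP ->; rewrite !expr0 subrr.
Qed.

Lemma is_lead_maff g0 g1 b (j : bool) :
  (forall c, (g0@_c != 0) || (g1@_c != 0) -> c != b -> lexlt c b) ->
  (if j then g1@_b != 0 else (g0@_b != 0) && (g1@_b == 0)) ->
  is_lead_mono (maff g0 g1) (mrcons b j).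
Proof.
move=> supp_lt lead_b; apply/is_lead_monoE.
rewrite mcoeff_maff mrcons_max mrconsK; split; first by case: j lead_b => // /andP[].
move=> m; rewrite mcoeff_maff lexlt_rcons mrconsK mrcons_max.
have m_eq : m = mrcons (mbelast m) (m ord_max) by rewrite mbelastK.
case: (m ord_max) m_eq => [|[|k]] m_eq /=; last by rewrite eqxx.
all: move=> mb ne; have [eb|nb] := eqVneq (mbelast m) b;
  last by rewrite supp_lt // mb ?orbT.
  by case: j lead_b ne => [_ _|_]; [rewrite orbT | rewrite m_eq eb eqxx].
case: j lead_b ne mb => [_|/andP[_ /eqP g1b] _]; first by rewrite m_eq eb eqxx.
by rewrite eb g1b eqxx.
Qed.

Section Fibers.
Variable P : ('I_n.+1 -> Real) -> Prop.
Hypothesis P01 : forall w, P w -> w ord_max = 0 \/ w ord_max = 1.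
Let P_ x := fun v => P (vrcons v x).

Lemma vanish_maff g0 g1 :
  (forall v, P_ 0 v -> meval v g0 = 0) -> (forall v, P_ 1 v -> meval v (g0 + g1) = 0) ->
  forall w, P w -> meval w (maff g0 g1) = 0.
Proof.
move=> van0 van1 w Pw; rewrite -(vbelastK w) meval_maff.
case: (P01 Pw) => w_max; rewrite w_max ?mulr0 ?mulr1 ?addr0 -?mevalD.
  by apply: van0; rewrite /P_ -w_max vbelastK.
by apply: van1; rewrite /P_ -w_max vbelastK.
Qed.

Lemma init_mono_fix_last f b j x : (forall w, P w -> meval w f = 0) ->
  is_lead_mono f (mrcons b j) -> (mfix_last f x)@_b != 0 -> init_mono (P_ x) b.
Proof.
move=> van lead fxb; exists (mfix_last f x); split=> [v Pv|].
  by rewrite meval_fix_last van.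
by rewrite -(mrconsK b j); apply: is_lead_fix_last; rewrite ?mrconsK.
Qed.

Lemma init_mono_rcons0 b :
  init_mono P (mrcons b 0) <-> init_mono (P_ 0) b /\ init_mono (P_ 1) b.
Proof.
split=> [[f [van lead]]|].
  have [fb _] := (is_lead_monoE f _).1 lead.
  by split; apply: (init_mono_fix_last van lead); rewrite mcoeff_fix_last0.
case=> -[g0 [van0 /is_lead_monoE [g0b lead0]]] [g1 [van1 /is_lead_monoE [g1b lead1]]].
(* subtracting a multiple of g1 cancels the leading term of g0 *)
pose h := (g0@_b / g1@_b) *: g1 - g0.
exists (maff g0 h); split.
  apply: vanish_maff => // v /van1 g1v.
  by rewrite /h addrC subrK mevalZ g1v mulr0.
apply: (is_lead_maff (j := false)).
  move=> c; rewrite /h mcoeffB mcoeffZ; have [->|g0c _] := eqVneq (g0@_c) 0; last exact: lead0.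
  by rewrite subr0 /= => hc; apply: lead1; apply: contraNneq hc => ->; rewrite mulr0.
by rewrite g0b /h mcoeffB mcoeffZ mulfVK // subrr eqxx.
Qed.

Lemma init_mono_rcons1 b :
  init_mono P (mrcons b 1) <-> init_mono (P_ 0) b \/ init_mono (P_ 1) b.
Proof.
split=> [[f [van lead]]|].
  have [fb _] := (is_lead_monoE f _).1 lead.
  have diff := mcoeff_fix_last1 lead.
  have [f0|f0] := eqVneq (mfix_last f 0)@_b 0; [right|left].
    by apply: (init_mono_fix_last van lead); move: fb; rewrite -diff f0 subr0.
  exact: (init_mono_fix_last van lead).
case=> -[g [van /is_lead_monoE [gb lead]]].
  exists (maff g (- g)); split.
    by apply: vanish_maff => // v _; rewrite addrN meval0.
  apply: (is_lead_maff (j := true)); last by rewrite mcoeffN oppr_eq0.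
  by move=> c; rewrite mcoeffN oppr_eq0 orbb; apply: lead.
exists (maff 0 g); split.
  by apply: vanish_maff => [v _|v /van]; rewrite ?meval0 ?add0r.
by apply: (is_lead_maff (j := true)) => // c; rewrite mcoeff0 eqxx; apply: lead.
Qed.

End Fibers.
End LastVariable.

(* Points of {0,1}^N and squarefree monomials are encoded by [nat -> bool],
   so that the number of variables is a plain parameter that can be rewritten. *)
Definition bvec (N : nat) (s : nat -> bool) : 'I_N -> Real := fun i => (s i : nat)%:R.
Arguments bvec : clear implicits.
Definition bpoints (N : nat) (F : (nat -> bool) -> Prop) : ('I_N -> Real) -> Prop :=
  fun v => exists2 s, F s & v = bvec N s.
Arguments bpoints : clear implicits.
Definition sqmono (N : nat) (t : nat -> bool) : 'X_{1..N} := [multinom (t i : nat) | i < N].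
Arguments sqmono : clear implicits.

Section BooleanPoints.
Implicit Types (N n : nat) (s t : nat -> bool) (F : (nat -> bool) -> Prop).

Definition init_sqfree N F t : Prop := init_mono (bpoints N F) (sqmono N t).

Definition bfiber F n (x : bool) : (nat -> bool) -> Prop := fun s => F s /\ s n = x.
Definition eq_upto N s s' : Prop := forall i, (i < N)%N -> s i = s' i.

Lemma init_sqfree0 F t : init_sqfree 0 F t <-> ~ exists s, F s.
Proof.
split=> [init [s Fs]|noF]; first by apply: (init_mono_dim0 (v := bvec 0 s)) init; exists s.
by apply: init_mono_pred0 => v [s Fs _]; apply: noF; exists s.
Qed.

Lemma sqmono_rcons n t : sqmono n.+1 t = mrcons (sqmono n t) (t n).
Proof. by apply/mnmP=> i; rewrite !mnmE; case: unliftP => [k ->|->]; rewrite ?mnmE ?lift_max. Qed.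

Lemma bpoints_rcons n F (x : bool) v :
  bpoints n.+1 F (vrcons v (x : nat)%:R) <-> bpoints n (bfiber F n x) v.
Proof.
split=> [[s Fs e]|[s [Fs sx] ->]]; exists s => //.
- split=> //; move: (congr1 (fun w => w ord_max) e).
  by rewrite /vrcons unlift_none /bvec /= => /eqP; rewrite eqr_nat; case: (s n) x {e} => -[].
- apply: functional_extensionality=> k; move: (congr1 (fun w => w (lift ord_max k)) e).
  by rewrite /vrcons liftK /bvec lift_max.
- apply: functional_extensionality=> i; rewrite /vrcons /bvec.
  by case: unliftP => [k ->|->]; rewrite ?lift_max //= sx.
Qed.

Lemma init_sqfreeS n F t : init_sqfree n.+1 F t <->
  if t n then init_sqfree n (bfiber F n false) t \/ init_sqfree n (bfiber F n true) t
  else init_sqfree n (bfiber F n false) t /\ init_sqfree n (bfiber F n true) t.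
Proof.
have P01 w : bpoints n.+1 F w -> w ord_max = 0 \/ w ord_max = 1.
  by move=> [s _ ->]; rewrite /bvec; case: (s n); [right|left].
have fiberE (x : bool) : init_sqfree n (bfiber F n x) t <->
    init_mono (fun v => bpoints n.+1 F (vrcons v (x : nat)%:R)) (sqmono n t).
  by split; apply: eq_init_mono => v; [symmetry|]; apply: bpoints_rcons.
rewrite [init_sqfree n.+1 F t]/init_sqfree sqmono_rcons.
by case: (t n); rewrite !fiberE; [apply: init_mono_rcons1 | apply: init_mono_rcons0].
Qed.

Lemma eq_init_sqfree N F F' t t' : eq_upto N t t' ->
  (forall s, F s -> exists2 s', F' s' & eq_upto N s s') ->
  (forall s', F' s' -> exists2 s, F s & eq_upto N s s') ->
  init_sqfree N F t <-> init_sqfree N F' t'.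
Proof.
move=> tt' FF' F'F; rewrite /init_sqfree.
have -> : sqmono N t = sqmono N t' by apply/mnmP=> i; rewrite !mnmE tt'.
have bvecE s s' : eq_upto N s s' -> bvec N s = bvec N s'.
  by move=> ss'; apply: functional_extensionality=> i; rewrite /bvec ss'.
split; apply: eq_init_mono => v; split=> -[s Fs ->].
- by have [s' F's' /bvecE ->] := FF' s Fs; exists s'.
- by have [s0 Fs0 /bvecE <-] := F'F s Fs; exists s0.
- by have [s0 Fs0 /bvecE <-] := F'F s Fs; exists s0.
- by have [s' F's' /bvecE ->] := FF' s Fs; exists s'.
Qed.

End BooleanPoints.

Local Close Scope ring_scope.
Local Open Scope fset_scope.

Definition indic (E B : {fset nat}) : nat -> bool := fun k => gel E k \in B.
Definition bconfig (E : {fset nat}) (Bs : {fset {fset nat}}) : (nat -> bool) -> Prop :=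
  fun s => exists2 B, B \in Bs & s = indic E B.

Lemma in_initialE (E : {fset nat}) Bs (a : 'X_{1..gsz E}) :
  in_initial Bs ('X_[a] : Rpoly E) <->
  init_mono (fun v => exists2 B, B \in Bs & v = @charvec E B) a.
Proof.
split=> [[l [lead_l sum_l]]|[f [van lead]]]; last first.
  exists [:: (1%R, f, a)]; split; last by rewrite big_seq1 /= mul1r.
  by move=> t; rewrite inE => /eqP -> /=; split=> // B BsB; apply: van; exists B.
have := congr1 (mcoeff a) sum_l; rewrite mcoeffX eqxx raddf_sum /=.
have [/hasP[t tl ta] _|no_div] := boolP (has (fun t => (t.2 <= a)%MM) l).
  have [van lead] := lead_l t tl; rewrite -(submK ta) addmC.
  by apply: init_monoD; exists t.1.2; split=> // v [B BsB ->]; apply: van.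
rewrite big1_seq => [/eqP|t /andP[_ tl]]; first by rewrite oner_eq0.
rewrite mcoeffMX_cond; case: ifP=> // ta.
by case/hasP: no_div; exists t.
Qed.

Lemma in_SlexE E Bs tau :
  in_Slex E Bs tau <-> tau `<=` E /\ ~ init_sqfree (gsz E) (bconfig E Bs) (indic E tau).
Proof.
rewrite /in_Slex in_initialE; have pointsE v :
    (exists2 B, B \in Bs & v = @charvec E B) <-> bpoints (gsz E) (bconfig E Bs) v.
  by split=> [[B BsB ->]|[_ [B BsB ->] ->]]; [exists (indic E B) => //; exists B | exists B].
by split=> -[sub init]; split=> // h; apply: init; apply: eq_init_mono h => v; rewrite pointsE.
Qed.

Lemma in_Slex_fset0 E tau : ~ in_Slex E fset0 tau.
Proof.
by rewrite in_SlexE => -[_]; apply; apply: init_mono_pred0 => v [s [B]]; rewrite in_fset0.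
Qed.

Lemma in_Slex_nil Bs tau : in_Slex fset0 Bs tau <-> tau = fset0 /\ Bs != fset0.
Proof.
rewrite in_SlexE fsubset0 /gsz cardfs0 init_sqfree0.
split=> [[/eqP-> noB]|[-> /fset0Pn [B BsB]]].
  split=> //; apply/fset0Pn; apply: NNPP=> noB'.
  by apply: noB=> -[s [B BsB _]]; apply: noB'; exists B.
by split=> //; apply; exists (indic fset0 B); exists B.
Qed.

Definition bases_fiber (Bs : {fset {fset nat}}) (m : nat) (x : bool) : {fset {fset nat}} :=
  [fset B `\ m | B in Bs & (m \in B) == x].

Section BasesFiber.
Variables (Bs : {fset {fset nat}}) (m : nat).
Implicit Types (B C : {fset nat}) (x : bool).

Lemma bases_fiberP x C :
  reflect (exists2 B, B \in Bs & (m \in B) = x /\ C = B `\ m) (C \in bases_fiber Bs m x).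
Proof.
apply: (iffP idP) => [/imfsetP [B /=]|[B BsB [mB ->]]].
  by rewrite inE => /andP[BsB /eqP mB] ->; exists B.
by apply/imfsetP; exists B; rewrite //= inE BsB mB eqxx.
Qed.

Lemma bases_fiber0_mem B : B \in Bs -> m \notin B -> B \in bases_fiber Bs m false.
Proof. by move=> BsB mB; apply/bases_fiberP; exists B; rewrite ?mem_fsetD1 ?(negbTE mB). Qed.

Lemma bases_fiber1_mem B : B \in Bs -> m \in B -> B `\ m \in bases_fiber Bs m true.
Proof. by move=> BsB mB; apply/bases_fiberP; exists B. Qed.

Lemma notin_bases_fiber x C : C \in bases_fiber Bs m x -> m \notin C.
Proof. by case/bases_fiberP=> B _ [_ ->]; rewrite in_fsetD1 eqxx. Qed.

Lemma bases_fiber_sub E x : (forall B, B \in Bs -> B `<=` E) ->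
  forall C, C \in bases_fiber Bs m x -> C `<=` E `\ m.
Proof. by move=> Bs_sub C /bases_fiberP [B /Bs_sub BE [_ ->]]; apply: fsetSD. Qed.

Let coloop := [forall B : Bs, m \in val B].
Let loop := [forall B : Bs, m \notin val B].

Lemma del_basesE : del_bases Bs m = bases_fiber Bs m coloop.
Proof.
rewrite /del_bases -/coloop; case: (boolP coloop) => [/forallP all_m|_].
  rewrite /bases_fiber; apply: eq_imfset => // B; rewrite inE.
  by case: (boolP (B \in Bs)) => // BsB; rewrite (all_m [` BsB]).
apply/fsetP=> C; apply/idP/bases_fiberP => [|[B BsB [/negbT mB ->]]].
  by rewrite !inE => /andP[BsC mC]; exists C; rewrite ?mem_fsetD1 ?(negbTE mC).
by rewrite mem_fsetD1 // !inE BsB.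
Qed.

Lemma con_basesE : con_bases Bs m = bases_fiber Bs m (~~ loop).
Proof.
rewrite /con_bases -/loop; case: (boolP loop) => [/forallP no_m|_].
  apply/fsetP=> C; apply/idP/bases_fiberP => [BsC|[B BsB [/negbT mB ->]]].
    by exists C; rewrite ?mem_fsetD1 ?(negbTE (no_m [` BsC])).
  by rewrite mem_fsetD1.
by rewrite /bases_fiber; apply: eq_imfset => // B; rewrite !inE /= eqb_id.
Qed.

Lemma bases_fiber0_del :
  bases_fiber Bs m false = fset0 \/ bases_fiber Bs m false = del_bases Bs m.
Proof.
rewrite del_basesE; case: (boolP coloop) => [/forallP all_m|_]; [left|by right].
apply/fsetP=> C; rewrite in_fset0; apply/bases_fiberP => -[B BsB [mB _]].
by move: (all_m [` BsB]); rewrite /= mB.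
Qed.

Lemma bases_fiber1_con :
  bases_fiber Bs m true = fset0 \/ bases_fiber Bs m true = con_bases Bs m.
Proof.
rewrite con_basesE; case: (boolP loop) => [/forallP no_m|_]; [left|by right].
apply/fsetP=> C; rewrite in_fset0; apply/bases_fiberP => -[B BsB [mB _]].
by move: (no_m [` BsB]); rewrite /= mB.
Qed.

Lemma del_bases_mem B : B \in Bs -> m \notin B -> B \in del_bases Bs m.
Proof.
move=> BsB mB; rewrite del_basesE; case: (boolP coloop) => [/forallP all_m|_].
  by move: (all_m [` BsB]); rewrite /= (negbTE mB).
exact: bases_fiber0_mem.
Qed.

Lemma con_bases_mem B : B \in Bs -> m \in B -> B `\ m \in con_bases Bs m.
Proof.
move=> BsB mB; rewrite con_basesE; case: (boolP loop) => [/forallP no_m|_].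
  by move: (no_m [` BsB]); rewrite /= mB.
exact: bases_fiber1_mem.
Qed.

End BasesFiber.

Section MaxElement.
Variables (E : {fset nat}) (m : nat).
Hypotheses (mE : m \in E) (m_max : forall x, x \in E -> x <= m).
Let E' := E `\ m.
Let n := gsz E'.

Lemma sort_fsetD1 : sort leq E = rcons (sort leq E') m.
Proof.
apply: (sorted_eq leq_trans anti_leq); first exact: (sort_sorted leq_total).
  case e: (sort leq E') => [|x s] //=; rewrite rcons_path -/(sorted leq (x :: s)) -e.
  rewrite (sort_sorted leq_total) m_max //.
  by have := mem_last x s; rewrite -e mem_sort in_fsetD1 => /andP[].
apply: uniq_perm; rewrite ?rcons_uniq ?sort_uniq ?fset_uniq ?mem_sort ?in_fsetD1 ?eqxx //.
by move=> x; rewrite mem_sort mem_rcons in_cons mem_sort in_fsetD1; case: eqP=> [->|].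
Qed.

Lemma gsz_fsetD1 : gsz E = n.+1.
Proof. by rewrite /gsz (cardfsD1 m E) mE add1n. Qed.

Lemma gel_fsetD1 k : k < n -> gel E k = gel E' k.
Proof. by move=> kn; rewrite /gel sort_fsetD1 nth_rcons size_sort kn. Qed.

Lemma gel_fsetD1_neq k : k < n -> gel E' k != m.
Proof.
move=> kn; have : gel E' k \in E' by rewrite /gel -(mem_sort leq) mem_nth // size_sort.
by rewrite in_fsetD1 => /andP[].
Qed.

Lemma indic_max tau : indic E tau n = (m \in tau).
Proof. by rewrite /indic /gel sort_fsetD1 nth_rcons size_sort ltnn eqxx. Qed.

Lemma indic_fsetD1 tau : eq_upto n (indic E tau) (indic E' (tau `\ m)).
Proof. by move=> i i_n; rewrite /indic gel_fsetD1 // in_fsetD1 gel_fsetD1_neq. Qed.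

Lemma init_sqfree_fiber Bs x t t' : eq_upto n t t' ->
  init_sqfree n (bfiber (bconfig E Bs) n x) t <->
  init_sqfree n (bconfig E' (bases_fiber Bs m x)) t'.
Proof.
move=> tt'; apply: eq_init_sqfree => // [s [[B BsB ->] Bx]|_ [_ /bases_fiberP [B BsB [mB ->]] ->]].
  exists (indic E' (B `\ m)); last exact: indic_fsetD1.
  by exists (B `\ m) => //; apply/bases_fiberP; exists B; rewrite -?indic_max.
exists (indic E B); last exact: indic_fsetD1.
by split; [exists B | rewrite indic_max].
Qed.

Lemma fsubset_fsetD1 tau : (tau `\ m `<=` E') = (tau `<=` E).
Proof.
apply/idP/idP=> [sub|]; last exact: fsetSD.
apply/fsubsetP=> x taux; have [->//|xm] := eqVneq x m.
by apply: (fsubsetP (fsubsetDl E [fset m])); apply: (fsubsetP sub); rewrite in_fsetD1 xm.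
Qed.

Lemma in_Slex_split Bs tau : in_Slex E Bs tau <->
  if m \in tau then in_Slex E' (bases_fiber Bs m false) (tau `\ m) /\
                    in_Slex E' (bases_fiber Bs m true) (tau `\ m)
  else in_Slex E' (bases_fiber Bs m false) (tau `\ m) \/
       in_Slex E' (bases_fiber Bs m true) (tau `\ m).
Proof.
rewrite [in_Slex E Bs tau]in_SlexE gsz_fsetD1 init_sqfreeS indic_max.
have fibE x := init_sqfree_fiber Bs x (indic_fsetD1 tau).
case: (m \in tau); rewrite !in_SlexE fsubset_fsetD1 !fibE; first tauto.
by have := classic (init_sqfree n (bconfig E' (bases_fiber Bs m false)) (indic E' (tau `\ m)));
  tauto.
Qed.

End MaxElement.

Definition basis_exchange (Bs : {fset {fset nat}}) : Prop :=
  forall B1 B2 x, B1 \in Bs -> B2 \in Bs -> x \in B1 `\` B2 ->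
    exists2 y, y \in B2 `\` B1 & (B1 `\ x) `|` [fset y] \in Bs.

(* Exchanging inside one fibre never trades m, since m is in both bases or in neither. *)
Lemma basis_exchange_fiber Bs m x : basis_exchange Bs -> basis_exchange (bases_fiber Bs m x).
Proof.
move=> exch _ _ z /bases_fiberP [B1 BsB1 [mB1 ->]] /bases_fiberP [B2 BsB2 [mB2 ->]].
rewrite !(in_fsetD, in_fset1) => /andP[zB2 /andP[zm zB1]]; rewrite zm /= in zB2.
have zB1B2 : z \in B1 `\` B2 by rewrite in_fsetD zB1 zB2.
have [y] := exch B1 B2 z BsB1 BsB2 zB1B2.
rewrite in_fsetD => /andP[yB1 yB2] BsB3; have ym : y != m.
  by apply: contraNneq yB1 => ym; rewrite ym mB1 -mB2 -ym.
exists y; first by rewrite !(in_fsetD, in_fset1) ym yB2 (negbTE yB1).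
apply/bases_fiberP; exists (B1 `\ z `|` [fset y]) => //; split.
  by rewrite !(in_fsetU, in_fsetD1, in_fset1) eq_sym zm (eq_sym m) (negbTE ym) orbF.
apply/fsetP=> w; rewrite !(in_fsetU, in_fsetD1, in_fset1).
by case: (eqVneq w m) => [->|_] /=; rewrite ?andbF // eq_sym (negbTE ym).
Qed.

Lemma bases_fiber_matroid E Bs m x : is_matroid E Bs -> bases_fiber Bs m x != fset0 ->
  is_matroid (E `\ m) (bases_fiber Bs m x).
Proof.
by case=> _ Bs_sub exch ne; split=> //; [apply: bases_fiber_sub | apply: basis_exchange_fiber].
Qed.

Lemma del_matroid E Bs m : is_matroid E Bs -> is_matroid (E `\ m) (del_bases Bs m).
Proof.
move=> M; have [/fset0Pn [B0 BsB0] _ _] := M; rewrite del_basesE.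
apply: bases_fiber_matroid => //; apply/fset0Pn.
case: (boolP [forall B : Bs, m \in val B]) => [/forallP all_m|/forallPn [[B BsB] /= mB]].
  by exists (B0 `\ m); apply: bases_fiber1_mem => //; apply: (all_m [` BsB0]).
by exists B; apply: bases_fiber0_mem.
Qed.

Lemma con_matroid E Bs m : is_matroid E Bs -> is_matroid (E `\ m) (con_bases Bs m).
Proof.
move=> M; have [/fset0Pn [B0 BsB0] _ _] := M; rewrite con_basesE.
apply: bases_fiber_matroid => //; apply/fset0Pn.
case: (boolP [forall B : Bs, m \notin val B]) => [/forallP no_m|].
  by exists B0; apply: bases_fiber0_mem => //; apply: (no_m [` BsB0]).
case/forallPn=> -[B BsB] /= /negbNE mB.
by exists (B `\ m); apply: bases_fiber1_mem.
Qed.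

Lemma del_bases_sub E Bs m : (forall B, B \in Bs -> B `<=` E) ->
  forall B, B \in del_bases Bs m -> B `<=` E `\ m.
Proof. by rewrite del_basesE; apply: bases_fiber_sub. Qed.

Lemma con_bases_sub E Bs m : (forall B, B \in Bs -> B `<=` E) ->
  forall B, B \in con_bases Bs m -> B `<=` E `\ m.
Proof. by rewrite con_basesE; apply: bases_fiber_sub. Qed.

Definition fmax (E : {fset nat}) : nat := \max_(x <- E) x.

Lemma fmax_eq (E : {fset nat}) m : m \in E -> (forall x, x \in E -> x <= m) -> fmax E = m.
Proof.
move=> mE m_max; apply/anti_leq/andP; split; last exact: leq_bigmax_seq mE _.
by apply/bigmax_leqP_seq => x xE _; apply: m_max.
Qed.

Lemma fmax_mem (E : {fset nat}) : E != fset0 -> fmax E \in E.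
Proof.
case/fset0Pn=> x xE; have : (fmax E == 0) || (fmax E \in E).
  rewrite /fmax big_seq; apply: (big_ind (fun y => (y == 0) || (y \in E))) => //.
    by move=> a b; case: (leqP a b).
  by move=> y ->; rewrite orbT.
case/orP=> // /eqP E0; have : x <= fmax E := leq_bigmax_seq _ xE isT.
by rewrite -/(fmax E) E0 leqn0 => /eqP x0; rewrite -x0.
Qed.

Lemma fset_max_ind (P : {fset nat} -> Prop) : P fset0 ->
  (forall E m, m \in E -> (forall x, x \in E -> x <= m) -> P (E `\ m) -> P E) ->
  forall E, P E.
Proof.
move=> P0 PS E; have [k] := ubnP #|` E|; elim: k E => // k IH E; rewrite ltnS => lt_E.
have [->//|nE] := eqVneq E fset0.
have mE := fmax_mem nE; apply: (PS _ (fmax E)) => //.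
  by move=> x xE; apply: (leq_bigmax_seq _ xE isT).
by apply: IH; move: lt_E; rewrite (cardfsD1 (fmax E) E) mE add1n.
Qed.

Definition in_Slexb E Bs tau : bool :=
  is_left (excluded_middle_informative (in_Slex E Bs tau)).

Lemma in_SlexbP E Bs tau : reflect (in_Slex E Bs tau) (in_Slexb E Bs tau).
Proof. by rewrite /in_Slexb; case: excluded_middle_informative => h; constructor. Qed.

Definition lam_step E Bs m (L0 L1 : {fset nat} -> {fset nat}) B : {fset nat} :=
  if m \in B then
    let tau := L1 (B `\ m) in if in_Slexb E Bs (m |` tau) then m |` tau else tau
  else L0 B.

Lemma lam_step_fsetD1 E Bs m L0 L1 B : m \in B -> m \notin L1 (B `\ m) ->
  lam_step E Bs m L0 L1 B `\ m = L1 (B `\ m).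
Proof.
by move=> mB mL; rewrite /lam_step mB; case: in_Slexb; [apply: fsetU1K | apply: mem_fsetD1].
Qed.

Definition sub_bij_Slex E Bs (L : {fset nat} -> {fset nat}) : Prop :=
  is_bij_to_Slex E Bs L /\ forall B, B \in Bs -> L B `<=` B.

Lemma sub_bij_Slex_fset0 E L : sub_bij_Slex E fset0 L.
Proof. by split=> [|B]; [split=> [B|B1 B2|tau /in_Slex_fset0] | ]; rewrite ?in_fset0. Qed.

Lemma sub_bij_Slex_nil Bs L : (forall B, B \in Bs -> B `<=` fset0) ->
  (forall B, L B = fset0) -> sub_bij_Slex fset0 Bs L.
Proof.
move=> Bs_sub L0; split=> [|B _]; last by rewrite L0 fsub0set.
split=> [B BsB|B1 B2 /Bs_sub + /Bs_sub + _|tau /in_Slex_nil [-> /fset0Pn [B BsB]]].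
- by rewrite L0; apply/in_Slex_nil; split=> //; apply/fset0Pn; exists B.
- by rewrite !fsubset0 => /eqP-> /eqP->.
- by exists B.
Qed.

Section LamStep.
Variables (E : {fset nat}) (m : nat) (Bs : {fset {fset nat}}).
Variables L0 L1 : {fset nat} -> {fset nat}.
Hypotheses (mE : m \in E) (m_max : forall x, x \in E -> x <= m).
Hypothesis bij0 : sub_bij_Slex (E `\ m) (bases_fiber Bs m false) L0.
Hypothesis bij1 : sub_bij_Slex (E `\ m) (bases_fiber Bs m true) L1.
Let L := lam_step E Bs m L0 L1.

Let Lx x := if x then L1 else L0.

Let notin_Lx x C : C \in bases_fiber Bs m x -> m \notin Lx x C.
Proof.
move=> BsC; apply: contra (notin_bases_fiber BsC); apply: (fsubsetP _).
by case: x BsC => BsC; [apply: bij1.2 | apply: bij0.2].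
Qed.

Let Lx_in_Slex x C : C \in bases_fiber Bs m x ->
  in_Slex (E `\ m) (bases_fiber Bs m x) (Lx x C).
Proof. by case: x => BsC; [case: bij1.1 => + _ _ | case: bij0.1 => + _ _]; apply. Qed.

Lemma lam_step_sub B : B \in Bs -> L B `<=` B.
Proof.
move=> BsB; rewrite /L /lam_step; case: (boolP (m \in B)) => mB; last first.
  exact: bij0.2 (bases_fiber0_mem BsB mB).
have sub1 : L1 (B `\ m) `<=` B.
  exact: fsubset_trans (bij1.2 _ (bases_fiber1_mem BsB mB)) (fsubsetDl _ _).
by case: in_Slexb; rewrite // fsubUset fsub1set mB.
Qed.

Lemma lam_step_in_Slex B : B \in Bs -> in_Slex E Bs (L B).
Proof.
move=> BsB; rewrite /L /lam_step; case: (boolP (m \in B)) => mB /=.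
  have fib1 := bases_fiber1_mem BsB mB.
  case: in_SlexbP => // _; apply/(in_Slex_split mE m_max).
  rewrite (negbTE (notin_Lx fib1)) (mem_fsetD1 (notin_Lx fib1)).
  by right; apply: Lx_in_Slex fib1.
have fib0 := bases_fiber0_mem BsB mB.
apply/(in_Slex_split mE m_max).
rewrite (negbTE (notin_Lx fib0)) (mem_fsetD1 (notin_Lx fib0)).
by left; apply: Lx_in_Slex fib0.
Qed.

Lemma lam_step_fsetD1E B : B \in Bs ->
  L B `\ m = if m \in B then L1 (B `\ m) else L0 B.
Proof.
move=> BsB; case: (boolP (m \in B)) => mB.
  by apply: lam_step_fsetD1 mB (notin_Lx (bases_fiber1_mem BsB mB)).
by rewrite /L /lam_step (negbTE mB) mem_fsetD1 ?(notin_Lx (bases_fiber0_mem BsB mB)).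
Qed.

(* If m is in B but L B = tau = L0 C, then tau is a face of both fibres, so tau + m is in
   S_lex(M) and L B would contain m. *)
Lemma lam_step_neq B C : B \in Bs -> C \in Bs -> m \in B -> m \notin C -> L B != L C.
Proof.
move=> BsB BsC mB mC; apply/eqP=> LBC.
have fib0 := bases_fiber0_mem BsC mC; have fib1 := bases_fiber1_mem BsB mB.
have tauE : L1 (B `\ m) = L0 C.
  by move: (lam_step_fsetD1E BsB) (lam_step_fsetD1E BsC); rewrite mB (negbTE mC) LBC => ->.
move: LBC; rewrite /L /lam_step mB (negbTE mC).
case: in_SlexbP => [_ LC|]; first by move: (notin_Lx fib0); rewrite /= -LC fset1U1.
case; apply/(in_Slex_split mE m_max); rewrite fset1U1 fsetU1K ?(notin_Lx fib1) //.
by split; [rewrite tauE; apply: Lx_in_Slex fib0 | apply: Lx_in_Slex fib1].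
Qed.

Lemma lam_step_inj B C : B \in Bs -> C \in Bs -> L B = L C -> B = C.
Proof.
case: bij0 bij1 => -[_ inj0 _] _ [[_ inj1 _] _] BsB BsC LBC.
have := congr1 (fun X => X `\ m) LBC.
rewrite /= !lam_step_fsetD1E //.
case: (boolP (m \in B)) => mB; case: (boolP (m \in C)) => mC.
- move/(inj1 _ _ (bases_fiber1_mem BsB mB) (bases_fiber1_mem BsC mC)) => BC.
  by rewrite -(fsetD1K mB) -(fsetD1K mC) BC.
- by move: (lam_step_neq BsB BsC mB mC); rewrite LBC eqxx.
- by move: (lam_step_neq BsC BsB mC mB); rewrite LBC eqxx.
- exact: inj0 (bases_fiber0_mem BsB mB) (bases_fiber0_mem BsC mC).
Qed.

Lemma lam_step_surj tau : in_Slex E Bs tau -> exists2 B, B \in Bs & L B = tau.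
Proof.
case: bij0 bij1 => -[_ _ surj0] _ [[_ _ surj1] _] S_tau.
have from_fiber1 : in_Slex (E `\ m) (bases_fiber Bs m true) (tau `\ m) ->
    in_Slexb E Bs (m |` (tau `\ m)) = (m \in tau) -> exists2 B, B \in Bs & L B = tau.
  case/surj1=> _ /bases_fiberP [B BsB [mB ->]] LB cond; exists B => //.
  rewrite /L /lam_step mB LB cond; case: ifP => [/fsetD1K //|/negbT mtau].
  by rewrite mem_fsetD1.
move/(in_Slex_split mE m_max): (S_tau); case: (boolP (m \in tau)) => mtau.
  by case=> _ S1; apply: from_fiber1; rewrite // fsetD1K // mtau; apply/in_SlexbP.
rewrite (mem_fsetD1 mtau) => S01.
case: (classic (in_Slex (E `\ m) (bases_fiber Bs m false) tau)) => [/surj0 [B fib0 LB]|notS0].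
  case/bases_fiberP: fib0 => B' BsB' [/negbT mB' BE]; exists B' => //.
  by rewrite /L /lam_step (negbTE mB') -(mem_fsetD1 mB') -BE.
apply: from_fiber1; rewrite (mem_fsetD1 mtau); first by case: S01.
rewrite (negbTE mtau); apply/negbTE/negP => /in_SlexbP /(in_Slex_split mE m_max).
by rewrite fset1U1 fsetU1K // => -[/notS0].
Qed.

Lemma sub_bij_lam_step : sub_bij_Slex E Bs L.
Proof.
split; last exact: lam_step_sub.
by split; [exact: lam_step_in_Slex | exact: lam_step_inj | exact: lam_step_surj].
Qed.

End LamStep.

Fixpoint lam_rec (k : nat) (E : {fset nat}) (Bs : {fset {fset nat}}) :
    {fset nat} -> {fset nat} :=
  if k is k'.+1 then
    let m := fmax E in
    lam_step E Bs m (lam_rec k' (E `\ m) (del_bases Bs m))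
                    (lam_rec k' (E `\ m) (con_bases Bs m))
  else fun _ => fset0.

Definition Lam : lam_family := fun E Bs => lam_rec #|` E| E Bs.

Lemma LamE (E : {fset nat}) Bs m : m \in E -> (forall x, x \in E -> x <= m) ->
  Lam E Bs = lam_step E Bs m (Lam (E `\ m) (del_bases Bs m)) (Lam (E `\ m) (con_bases Bs m)).
Proof. by move=> mE m_max; rewrite /Lam {1}(cardfsD1 m E) mE add1n /= (fmax_eq mE m_max). Qed.

Lemma Lam_sub_bij (E : {fset nat}) (Bs : {fset {fset nat}}) :
  (forall B, B \in Bs -> B `<=` E) -> sub_bij_Slex E Bs (Lam E Bs).
Proof.
elim/fset_max_ind: E Bs => [|E m mE m_max IH] Bs Bs_sub.
  by apply: sub_bij_Slex_nil => // B; rewrite /Lam cardfs0.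
rewrite (LamE Bs mE m_max); apply: sub_bij_lam_step => //.
  case: (bases_fiber0_del Bs m) => ->; first exact: sub_bij_Slex_fset0.
  by apply: IH; apply: del_bases_sub.
case: (bases_fiber1_con Bs m) => ->; first exact: sub_bij_Slex_fset0.
by apply: IH; apply: con_bases_sub.
Qed.

Lemma Lam_good : good_family Lam.
Proof.
move=> E Bs [_ Bs_sub _]; have [bij sub] := Lam_sub_bij Bs_sub.
split=> // m mE m_max B BsB.
split=> [|mB|mB]; first exact: sub.
  by rewrite (LamE Bs mE m_max) /lam_step (negbTE mB).
rewrite (LamE Bs mE m_max) lam_step_fsetD1 //.
have [_ subC] := Lam_sub_bij (con_bases_sub (m := m) Bs_sub).
by apply/negP => /(fsubsetP (subC _ (con_bases_mem BsB mB))); rewrite in_fsetD1 eqxx.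
Qed.

(* Injectivity forces every good family to follow the recursion that defines [Lam]. *)
Lemma good_family_step L E Bs m B : good_family L -> is_matroid E Bs ->
  m \in E -> (forall x, x \in E -> x <= m) -> B \in Bs ->
  L E Bs B = lam_step E Bs m (L (E `\ m) (del_bases Bs m)) (L (E `\ m) (con_bases Bs m)) B.
Proof.
move=> good M mE m_max BsB; have [[inS _ surj] step] := good E Bs M.
have [_ del con] := step m mE m_max B BsB.
rewrite /lam_step; case: (boolP (m \in B)) => mB; last exact: del.
have LBm := con mB; set tau := L _ _ (B `\ m) in LBm *.
have mtau : m \notin tau by rewrite -LBm in_fsetD1 eqxx.
case: in_SlexbP => [S_mtau|notS]; last first.
  have mL : m \notin L E Bs B.
    by apply/negP => mL; apply: notS; rewrite -LBm fsetD1K //; apply: inS.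
  by rewrite -LBm mem_fsetD1.
suff mL : m \in L E Bs B by rewrite -LBm fsetD1K.
have [C BsC LC] := surj _ S_mtau; have [subC _ conC] := step m mE m_max C BsC.
have mC : m \in C by apply: (fsubsetP subC); rewrite LC fset1U1.
have [[_ inj_con _] _] := good _ _ (con_matroid m M).
have CB : C `\ m = B `\ m.
  by apply: inj_con; rewrite ?con_bases_mem // -conC // LC fsetU1K.
have -> : B = C by rewrite -(fsetD1K mB) -CB fsetD1K.
by rewrite LC fset1U1.
Qed.

Lemma good_family_unique L1 L2 E Bs : good_family L1 -> good_family L2 -> is_matroid E Bs ->
  forall B, B \in Bs -> L1 E Bs B = L2 E Bs B.
Proof.
move=> g1 g2; elim/fset_max_ind: E Bs => [|E m mE m_max IH] Bs M B BsB.
  have [[in1 _ _] _] := g1 _ _ M; have [[in2 _ _] _] := g2 _ _ M.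
  by case/in_Slex_nil: (in1 _ BsB) => ->; case/in_Slex_nil: (in2 _ BsB) => ->.
rewrite (good_family_step g1 M mE m_max BsB) (good_family_step g2 M mE m_max BsB) /lam_step.
case: ifP => mB; last by apply: IH (del_matroid m M) _ (del_bases_mem BsB (negbT mB)).
by rewrite (IH _ (con_matroid m M) _ (con_bases_mem BsB mB)).
Qed.

Theorem corollary1p2 :
  (exists Lam : lam_family, good_family Lam) /\
  (forall Lam1 Lam2 : lam_family, good_family Lam1 -> good_family Lam2 ->
     forall E Bs, is_matroid E Bs -> forall B, B \in Bs -> Lam1 E Bs B = Lam2 E Bs B).
Proof.
split; first by exists Lam; exact: Lam_good.
by move=> L1 L2 g1 g2 E Bs; apply: good_family_unique.
Qed.
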